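(* Let $\mathcal T$ be an orbital category. The monotone map $c:\mathrm{wIndSys}_{\mathcal T}\to\mathrm{Fam}_{\mathcal T}$ has a fully faithful left adjoint $\mathcal F\mapsto\underline{\mathbb F}^{triv}_{\mathcal F}$ and a fully faithful right adjoint $\mathcal F\mapsto\underline{\mathbb F}_{\mathcal F}$.
   Context: For a small category $\mathcal T$, $\mathbb F_{\mathcal T}$ is the full subcategory of $\mathrm{Fun}(\mathcal T^{op},\mathrm{Set})$ on finite coproducts of representables; $\mathcal T$ is orbital if $\mathbb F_{\mathcal T}$ has pullbacks. $\mathbb F_V:=\mathbb F_{\mathcal T,/V}$, $*_V$ terminal; for $U\to V$, $\mathrm{Res}^V_U$ is pullback and $\mathrm{Ind}^V_U$ postcomposition. A full $\mathcal T$-subcategory $\mathcal C$ assigns isomorphism-closed classes $\mathcal C_V\subseteq\mathrm{Ob}\,\mathbb F_V$ stable under restriction. For $S\in\mathbb F_V$ with orbits $U$ and $T_U\in\mathbb F_U$, $\coprod_U^ST_U:=\coprod_U\mathrm{Ind}_U^VT_U$. A $\mathcal T$-weak indexing system is a full $\mathcal T$-subcategory with $\mathcal C_V\neq\emptyset\Rightarrow *_V\in\mathcal C_V$ and closed under $\coprod^S_UT_U$ for $S\in\mathcal C_V$, $T_U\in\mathcal C_U$; $\mathrm{wIndSys}_{\mathcal T}$ is their poset under inclusion. A $\mathcal T$-family is a full subcategory $\mathcal F$ with $V\to W$, $W\in\mathcal F$ $\Rightarrow V\in\mathcal F$; $\mathrm{Fam}_{\mathcal T}$ is their poset. $c(\mathcal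 C)=\{V\mid *_V\in\mathcal C_V\}$. For a family $\mathcal F$: $\underline{\mathbb F}^{triv}_{\mathcal F}$ has $V$-value $\{*_V\}$ (up to isomorphism) for $V\in\mathcal F$ and $\emptyset$ otherwise; $\underline{\mathbb F}_{\mathcal F}$ has $V$-value all of $\mathbb F_V$ for $V\in\mathcal F$ and $\emptyset$ otherwise. A monotone map $L$ is left adjoint to $\pi$ if $L(x)\le y\iff x\le\pi(y)$; it is fully faithful if it reflects the order. *)

From mathcomp Require Import all_boot.
Set Implicit Arguments.
Unset Strict Implicit.
Unset Printing Implicit Defensive.

Record Cat := {
  Ob : Type;
  Hom : Ob -> Ob -> Type;
  idm : forall a, Hom a a;
  cmp : forall x y z, Hom y z -> Hom x y -> Hom x z;
  cmp_id_l : forall a b (f : Hom a b), cmp (idm b) f = f;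
  cmp_id_r : forall a b (f : Hom a b), cmp f (idm a) = f;
  cmp_assoc : forall a b c d (f : Hom a b) (g : Hom b c) (h : Hom c d),
      cmp h (cmp g f) = cmp (cmp h g) f
}.
Arguments idm {_ _}.
Arguments cmp {_ _ _ _}.

Section FT.
Variable T : Cat.

(** An object  coprod_{i in I} y(U_i)  (I finite) is a finite family of objects.
    By the Yoneda lemma (representables are connected), a map
    coprod_i y(U_i) -> coprod_j y(W_j) is a choice, for each i, of an index j
    and a morphism U_i -> W_j of T. *)
Record FinT := { idx : finType; fobj : idx -> Ob T }.
Arguments fobj : clear implicits.

Definition FHom (S R : FinT) : Type :=
  forall i : idx S, { j : idx R & Hom (fobj S i) (fobj R j) }.

Definition FHom_eq (S R : FinT) (f g : FHom S R) : Prop := forall i, f i = g i.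

Definition fid (S : FinT) : FHom S S := fun i => existT _ i idm.
Arguments fid : clear implicits.

Definition fcomp (S R Q : FinT) (g : FHom R Q) (f : FHom S R) : FHom S Q :=
  fun i => existT _ (projT1 (g (projT1 (f i))))
                    (cmp (projT2 (g (projT1 (f i)))) (projT2 (f i))).

Definition single (V : Ob T) : FinT := {| idx := unit; fobj := fun _ => V |}.

Definition fsingle (U V : Ob T) (u : Hom U V) : FHom (single U) (single V) :=
  fun _ => existT (fun j : unit => Hom U V) tt u.

Definition is_pullback (X Y Z P : FinT) (f : FHom X Z) (g : FHom Y Z)
    (p1 : FHom P X) (p2 : FHom P Y) : Prop :=
  FHom_eq (fcomp f p1) (fcomp g p2) /\
  forall (Q : FinT) (q1 : FHom Q X) (q2 : FHom Q Y),
    FHom_eq (fcomp f q1) (fcomp g q2) ->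
    (exists h : FHom Q P, FHom_eq (fcomp p1 h) q1 /\ FHom_eq (fcomp p2 h) q2) /\
    (forall h h' : FHom Q P,
        FHom_eq (fcomp p1 h) q1 -> FHom_eq (fcomp p2 h) q2 ->
        FHom_eq (fcomp p1 h') q1 -> FHom_eq (fcomp p2 h') q2 ->
        FHom_eq h h').

Definition orbital : Prop :=
  forall (X Y Z : FinT) (f : FHom X Z) (g : FHom Y Z),
    exists (P : FinT) (p1 : FHom P X) (p2 : FHom P Y), is_pullback f g p1 p2.

Record SObj (V : Ob T) := { sbase : FinT; sstr : FHom sbase (single V) }.
Arguments sstr {V} s _.

Definition star (V : Ob T) : SObj V := {| sbase := single V; sstr := fid (single V) |}.

Definition slice_iso (V : Ob T) (A B : SObj V) : Prop :=
  exists (f : FHom (sbase A) (sbase B)) (g : FHom (sbase B) (sbase A)),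
    FHom_eq (fcomp g f) (fid _) /\ FHom_eq (fcomp f g) (fid _) /\
    FHom_eq (fcomp (sstr B) f) (sstr A).

Definition orbit_map (V : Ob T) (S : SObj V) (i : idx (sbase S)) :
  Hom (fobj (sbase S) i) V := projT2 (sstr S i).
Arguments orbit_map {V} S i.

(** coprod^S_U T_U := coprod_U Ind^V_U T_U *)
Definition indcoprod (V : Ob T) (S : SObj V)
    (R : forall i : idx (sbase S), SObj (fobj (sbase S) i)) : SObj V :=
  {| sbase := {| idx := {i : idx (sbase S) & idx (sbase (R i))};
                 fobj := fun p => fobj (sbase (R (tag p))) (tagged p) |};
     sstr := fun p => existT (fun _ : unit => _) tt
                (cmp (orbit_map S (tag p)) (orbit_map (R (tag p)) (tagged p))) |}.

Definition TSub := forall V : Ob T, SObj V -> Prop.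

Definition full_Tsubcat (C : TSub) : Prop :=
  (forall V (A B : SObj V), slice_iso A B -> C V A -> C V B) /\
  (* stable under restriction Res^V_U (pullback along U -> V) *)
  (forall U V (u : Hom U V) (S : SObj V) (P : FinT)
          (p1 : FHom P (sbase S)) (p2 : FHom P (single U)),
      is_pullback (sstr S) (fsingle u) p1 p2 ->
      C V S -> C U {| sbase := P; sstr := p2 |}).

Definition wIndSys (C : TSub) : Prop :=
  full_Tsubcat C /\
  (forall V (S : SObj V), C V S -> C V (star V)) /\
  (forall V (S : SObj V) (R : forall i : idx (sbase S), SObj (fobj (sbase S) i)),
      C V S -> (forall i, C _ (R i)) -> C V (indcoprod R)).

Definition Family (F : Ob T -> Prop) : Prop :=
  forall V W (f : Hom V W), F W -> F V.

Definition subC (C C' : TSub) : Prop := forall V (S : SObj V), C V S -> C' V S.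
Definition subF (F F' : Ob T -> Prop) : Prop := forall V, F V -> F' V.

Definition cmap (C : TSub) : Ob T -> Prop := fun V => C V (star V).

Definition Ftriv (F : Ob T -> Prop) : TSub :=
  fun V S => F V /\ slice_iso S (star V).
Definition Ffull (F : Ob T -> Prop) : TSub := fun V _ => F V.

End FT.

From mathcomp Require Import all_boot.
From Stdlib Require Import Setoid Morphisms.

(* An object S of F_V is isomorphic to *_V exactly when its structure map
   S -> V is an isomorphism of F_T.  Isomorphisms of F_T are closed under
   composition and pullback, and the structure map of coprod^S_U T_U factors
   as coprod_U T_U -> coprod_U U = S -> V, a coproduct of isomorphisms followed
   by one; so the objects isomorphic to some *_V with V in a family F form a
   weak indexing system, which any weak indexing system C with F inside c(C)
   contains by isomorphism closure.  Dually, S in C_V forces *_V in C_V, so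
   C lies in the constant system on c(C).  Both adjoints are fully faithful
   because c sends each of them back to F. *)

Section SliceCategories.
Set Implicit Arguments.
Unset Strict Implicit.
Variable T : Cat.
Implicit Types (S R Q P : FinT T) (V : Ob T).
Arguments fid {T S} _.
Arguments sstr {T V} s _.

#[export] Instance FHom_eq_equiv S R : Equivalence (@FHom_eq T S R).
Proof. by split=> [f i | f g E i | f g h E E' i] //; rewrite E // E'. Qed.

#[export] Instance fcomp_proper S R Q :
  Proper (@FHom_eq T R Q ==> @FHom_eq T S R ==> @FHom_eq T S Q) (@fcomp T S R Q).
Proof. by move=> g g' Eg f f' Ef i; rewrite /fcomp Ef Eg. Qed.

Lemma fcompA S R Q P (h : FHom Q P) (g : FHom R Q) (f : FHom S R) :
  FHom_eq (fcomp h (fcomp g f)) (fcomp (fcomp h g) f).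
Proof. by move=> i; rewrite /fcomp /= cmp_assoc. Qed.

Lemma fcomp_idl S R (f : FHom S R) : FHom_eq (fcomp fid f) f.
Proof. by move=> i; rewrite /fcomp /= cmp_id_l; case: (f i). Qed.

Lemma fcomp_idr S R (f : FHom S R) : FHom_eq (fcomp f fid) f.
Proof. by move=> i; rewrite /fcomp /= cmp_id_r; case: (f i). Qed.

Definition fiso S R (f : FHom S R) : Prop :=
  exists g : FHom R S, FHom_eq (fcomp g f) fid /\ FHom_eq (fcomp f g) fid.

#[export] Instance fiso_proper S R : Proper (@FHom_eq T S R ==> iff) (@fiso S R).
Proof. by move=> f f' E; split=> -[g Hg]; exists g; [rewrite -E | rewrite E]. Qed.

Lemma fiso_comp S R Q (g : FHom R Q) (f : FHom S R) :
  fiso g -> fiso f -> fiso (fcomp g f).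
Proof.
move=> [g' [Hg'g Hgg']] [f' [Hf'f Hff']]; exists (fcomp f' g'); split.
- by rewrite fcompA -(fcompA f') Hg'g fcomp_idr.
- by rewrite fcompA -(fcompA g) Hff' fcomp_idr.
Qed.

Lemma is_pullback_fid R Q (g : FHom R Q) : is_pullback fid g g fid.
Proof.
split=> [|P0 q1 q2 Hq]; first by rewrite fcomp_idl fcomp_idr.
split=> [|h h' _ E _ E'].
- by exists q2; rewrite -[q1]fcomp_idl Hq fcomp_idl.
- by transitivity q2; [rewrite -E | rewrite -E']; rewrite fcomp_idl.
Qed.

Lemma pullback_fiso S R Q P (f : FHom S Q) (g : FHom R Q)
    (p1 : FHom P S) (p2 : FHom P R) :
  is_pullback f g p1 p2 -> fiso f -> fiso p2.
Proof.
move=> [Hsq Hun] [f' [Hf'f Hff']].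
have Hq : FHom_eq (fcomp f (fcomp f' g)) (fcomp g fid).
  by rewrite fcompA Hff' fcomp_idl fcomp_idr.
have [[h [Hh1 Hh2]] _] := Hun _ _ _ Hq.
exists h; split=> //.
apply: (Hun _ _ _ Hsq).2; rewrite ?fcomp_idr //.
- by rewrite fcompA Hh1 -fcompA -Hsq fcompA Hf'f fcomp_idl.
- by rewrite fcompA Hh2 fcomp_idl.
Qed.

Lemma slice_iso_refl V (A : SObj V) : slice_iso A A.
Proof. by exists fid, fid; rewrite !fcomp_idr. Qed.

Lemma slice_iso_sym V (A B : SObj V) : slice_iso A B -> slice_iso B A.
Proof.
move=> [f [g [Hgf [Hfg Hs]]]]; exists g, f; do !split=> //.
by rewrite -Hs -fcompA Hfg fcomp_idr.
Qed.

Lemma slice_iso_trans V (A B C : SObj V) :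
  slice_iso A B -> slice_iso B C -> slice_iso A C.
Proof.
move=> [f [g [Hgf [Hfg Hs]]]] [f' [g' [Hgf' [Hfg' Hs']]]].
exists (fcomp f' f), (fcomp g g'); do !split.
- by rewrite fcompA -(fcompA g) Hgf' fcomp_idr.
- by rewrite fcompA -(fcompA f') Hfg fcomp_idr.
- by rewrite fcompA Hs'.
Qed.

Lemma slice_iso_starP V (S : SObj V) : slice_iso S (star V) <-> fiso (sstr S).
Proof.
split=> [[f [g [Hgf [Hfg Hs]]]] | [g [Hgs Hsg]]].
- by exists g; rewrite -Hs fcomp_idl.
- by exists (sstr S), g; rewrite fcomp_idl.
Qed.

Lemma sstrE V (S : SObj V) i : sstr S i = existT _ tt (orbit_map i).
Proof. by rewrite /orbit_map; case: (sstr S i) => [[] a]. Qed.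

Definition coprod_sstr V (S : SObj V) (R : forall i : idx (sbase S), SObj (fobj i)) :
    FHom (sbase (indcoprod R)) (sbase S) :=
  fun p => existT _ (tag p) (orbit_map (tagged p)).
Arguments coprod_sstr {V S} R _.

Lemma sstr_indcoprod V (S : SObj V) (R : forall i : idx (sbase S), SObj (fobj i)) :
  FHom_eq (sstr (indcoprod R)) (fcomp (sstr S) (coprod_sstr R)).
Proof. by move=> p; rewrite /fcomp (sstrE (S:=S)). Qed.

Lemma coprod_sstr_fiso V (S : SObj V) (R : forall i : idx (sbase S), SObj (fobj i)) :
  (forall i, fiso (sstr (R i))) -> fiso (coprod_sstr R).
Proof.
move=> /fin_all_exists[g Hg].
exists (fun i => existT _ (existT _ i (projT1 (g i tt))) (projT2 (g i tt))); split.
- case=> i j; have := (Hg i).1 j; rewrite /fcomp /fid /= sstrE /=.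
  case: (g i tt) => j' a /= E.
  pose into_coprod (s : {k : idx (sbase (R i)) & Hom (fobj j) (fobj k)}) :
    {q : idx (sbase (indcoprod R)) & Hom (fobj j) (fobj q)} :=
    existT _ (existT _ i (projT1 s)) (projT2 s).
  exact: (f_equal into_coprod E).
- move=> i; have := (Hg i).2 tt; rewrite /fcomp /fid /=.
  case: (g i tt) => j a /=; rewrite sstrE /=.
  by move=> /(f_equal (@projT2 unit (fun=> Hom _ _))) /= ->.
Qed.
End SliceCategories.

Section WeakIndexingSystems.
Variable T : Cat.
Implicit Types (C : TSub T) (F : Ob T -> Prop) (V : Ob T).

Lemma Family_cmap C : wIndSys C -> Family (cmap C).
Proof.
move=> [[_ Hres] _] V W f.
exact: Hres _ _ f (star W) _ _ _ (is_pullback_fid (fsingle f)).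
Qed.

Lemma Ftriv_star F V : F V -> Ftriv F (star V).
Proof. by split=> //; apply: slice_iso_refl. Qed.

Lemma wIndSys_Ftriv F : Family F -> wIndSys (Ftriv F).
Proof.
move=> HF; split; [split|split].
- move=> V A B HAB [HV HA]; split=> //.
  exact: slice_iso_trans (slice_iso_sym HAB) HA.
- move=> U V u S P p1 p2 Hpb [HV /slice_iso_starP HS]; split; first exact: HF HV.
  exact/slice_iso_starP/(pullback_fiso Hpb).
- by move=> V S [HV _]; apply: Ftriv_star.
- move=> V S R [HV /slice_iso_starP HS] HR; split=> //.
  apply/slice_iso_starP; rewrite (sstr_indcoprod (R:=R)); apply: fiso_comp HS _.
  by apply: coprod_sstr_fiso => i; apply/slice_iso_starP; case: (HR i).
Qed.

Lemma wIndSys_Ffull F : Family F -> wIndSys (Ffull F).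
Proof.
move=> HF; split; split=> //.
by move=> U V u S P p1 p2 _; apply: HF u.
Qed.

Lemma Ftriv_sub_iff F C : wIndSys C -> subC (Ftriv F) C <-> subF F (cmap C).
Proof.
move=> [[Hiso _] _]; split=> [H V HV | H V S [HV HS]]; first exact/H/Ftriv_star.
exact: Hiso _ _ _ (slice_iso_sym HS) (H V HV).
Qed.

Lemma sub_Ffull_iff F C : wIndSys C -> subF (cmap C) F <-> subC C (Ffull F).
Proof. by move=> [_ [Hstar _]]; split=> [H V S /Hstar /H | H V /H]. Qed.
End WeakIndexingSystems.

Theorem mainTheorem12 (T : Cat) (Horb : orbital T) :
  (* c is a well-defined monotone map wIndSys_T -> Fam_T *)
  (forall C : TSub T, wIndSys C -> Family (cmap C)) /\
  (forall C C' : TSub T, wIndSys C -> wIndSys C' -> subC C C' ->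
      subF (cmap C) (cmap C')) /\
  (* F |-> F^triv_F and F |-> F_F are maps Fam_T -> wIndSys_T *)
  (forall F : Ob T -> Prop, Family F -> wIndSys (Ftriv F) /\ wIndSys (Ffull F)) /\
  (* left adjoint *)
  (forall (F : Ob T -> Prop) (C : TSub T), Family F -> wIndSys C ->
      (subC (Ftriv F) C <-> subF F (cmap C))) /\
  (* right adjoint *)
  (forall (F : Ob T -> Prop) (C : TSub T), Family F -> wIndSys C ->
      (subF (cmap C) F <-> subC C (Ffull F))) /\
  (* both adjoints are fully faithful *)
  (forall F F' : Ob T -> Prop, Family F -> Family F' -> subC (Ftriv F) (Ftriv F') -> subF F F') /\
  (forall F F' : Ob T -> Prop, Family F -> Family F' -> subC (Ffull F) (Ffull F') -> subF F F').
Proof.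
split; first exact: Family_cmap.
split; first by move=> C C' _ _ H V; apply: H.
split; first by move=> F HF; split; [apply: wIndSys_Ftriv | apply: wIndSys_Ffull].
split; first by move=> F C _ /Ftriv_sub_iff.
split; first by move=> F C _ /sub_Ffull_iff.
split; first by move=> F F' _ _ H V /Ftriv_star /H [].
by move=> F F' _ _ H V; apply: H (star V).
Qed.
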